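(* Let $D$ be a square-free integer, let $\mathbb{Z}[\sqrt{D}]$ denote the ring of integers of $\mathbb{Q}(\sqrt{D})$, let $p$ be a prime integer which is irreducible but not prime in $\mathbb{Z}[\sqrt{D}]$, let $z\in I_p(D)$ and put $k=\lVert z\rVert/p$. For any $a,b,c,d,e,f\in\mathbb{Z}[\sqrt{D}]$, we have that $A(p,z)=BC$ where $B=\begin{pmatrix} a&b\\ c&1-a\end{pmatrix}$ and $C=\begin{pmatrix} d&e\\ f&1-d\end{pmatrix}$ are idempotent matrices if and only if $$p=ad+bf,\quad z(1-a)=kb,\quad \bar z a=pc,\quad zd=pe,\quad \bar z(1-d)=kf.$$
   Context: $\mathbb{Z}[\sqrt{D}]=\{a+b\sqrt{D}:a,b\in\mathbb{Z}\}$ if $D\equiv 2,3 \pmod 4$ and $\{\frac{a+b\sqrt{D}}{2}:a,b\in\mathbb{Z},a\equiv b \pmod 2\}$ if $D\equiv 1\pmod 4$. $\bar z$ denotes the conjugate and $\lVert z\rVert=z\bar z$ the norm. $I_p(D)$ is the set of all non-unit $z\in\mathbb{Z}[\sqrt{D}]$ such that $z\notin\langle p\rangle$ but there exists $m\notin\langle p\rangle$ with $zm\in\langle p\rangle$ (for such $z$, $p$ divides $\lVert z\rVert$). $A(p,z)=\begin{pmatrix} p & z\\ \bar z & \lVert z\rVert/p\end{pmatrix}$. A matrix $M$ is idempotent if $M^2=M$. *)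

From HB Require Import structures.
From mathcomp Require Import all_boot all_order all_algebra.
From mathcomp Require Import ring.
Set Implicit Arguments. Unset Strict Implicit. Unset Printing Implicit Defensive.
Import Order.TTheory GRing.Theory Num.Theory.
Local Open Scope ring_scope.

(* The ring of integers O_D of Q(sqrt D), represented on its Z-basis       *)
(* {1, w} where  w = sqrt D          if D = 2,3 (mod 4)                     *)
(*               w = (1 + sqrt D)/2  if D = 1   (mod 4).                    *)
(* In both cases w^2 = tD * w + nD with                                     *)
(*   tD = 0, nD = D              (D = 2,3 mod 4)                            *)
(*   tD = 1, nD = (D - 1)/4      (D = 1 mod 4),                             *)
(* and the conjugate of w is tD - w.  The element QI a b stands for a + b w.*)

Definition is1mod4 (D : int) : bool := (D %% 4)%Z == 1.
Definition tD (D : int) : int := if is1mod4 D then 1 else 0.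
Definition nD (D : int) : int := if is1mod4 D then ((D - 1) %/ 4)%Z else D.

Record qint (D : int) := QI { re : int; im : int }.

Section QintRing.
Variable D : int.

Definition qint2pair (x : qint D) := (re x, im x).
Definition pair2qint (p : int * int) : qint D := QI D p.1 p.2.
Lemma qint2pairK : cancel qint2pair pair2qint. Proof. by case. Qed.

HB.instance Definition _ := Countable.copy (qint D) (can_type qint2pairK).

Definition qzero : qint D := QI D 0 0.
Definition qone : qint D := QI D 1 0.
Definition qopp (x : qint D) : qint D := QI D (- re x) (- im x).
Definition qadd (x y : qint D) : qint D := QI D (re x + re y) (im x + im y).
Definition qmul (x y : qint D) : qint D :=
  QI D (re x * re y + nD D * im x * im y)
       (re x * im y + im x * re y + tD D * im x * im y).

Lemma qaddA : associative qadd.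
Proof. by case=> a b [c d] [e f]; rewrite /qadd /=; congr QI; ring. Qed.
Lemma qaddC : commutative qadd.
Proof. by case=> a b [c d]; rewrite /qadd /=; congr QI; ring. Qed.
Lemma qadd0 : left_id qzero qadd.
Proof. by case=> a b; rewrite /qadd /=; congr QI; ring. Qed.
Lemma qaddN : left_inverse qzero qopp qadd.
Proof. by case=> a b; rewrite /qadd /=; congr QI; ring. Qed.

HB.instance Definition _ := GRing.isZmodule.Build (qint D) qaddA qaddC qadd0 qaddN.

Lemma qmulA : associative qmul.
Proof. by case=> a b [c d] [e f]; rewrite /qmul /=; congr QI; ring. Qed.
Lemma qmulC : commutative qmul.
Proof. by case=> a b [c d]; rewrite /qmul /=; congr QI; ring. Qed.
Lemma qmul1 : left_id qone qmul.
Proof. by case=> a b; rewrite /qmul /=; congr QI; ring. Qed.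
Lemma qmulDl : left_distributive qmul qadd.
Proof. by case=> a b [c d] [e f]; rewrite /qmul /= /qadd /=; congr QI; ring. Qed.
Lemma qone_neq0 : qone != 0.
Proof. by []. Qed.

HB.instance Definition _ :=
  GRing.Zmodule_isComNzRing.Build (qint D) qmulA qmulC qmul1 qmulDl qone_neq0.

End QintRing.

(* Conjugation: conj (a + b w) = a + b (tD - w) = (a + tD b) - b w. *)
Definition qconj (D : int) (x : qint D) : qint D :=
  QI D (re x + tD D * im x) (- im x).

Definition qnorm (D : int) (z : qint D) : qint D := z * qconj z.

(* Its integer value (the w-coordinate of z * conj z is always 0). *)
Definition qnormZ (D : int) (z : qint D) : int := re (qnorm z).

Definition squarefree (D : int) : Prop :=
  D != 0 /\ forall n : nat, (n * n %| `|D|)%N -> n = 1%N.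

Definition is_unit (R : comNzRingType) (x : R) : Prop := exists y, x * y = 1.
Definition divides (R : comNzRingType) (x y : R) : Prop := exists w, y = x * w.
Definition in_pideal (R : comNzRingType) (p x : R) : Prop := divides p x.

Definition irreducible_elt (R : comNzRingType) (p : R) : Prop :=
  p != 0 /\ ~ is_unit p /\
  forall x y : R, p = x * y -> is_unit x \/ is_unit y.

Definition prime_elt (R : comNzRingType) (p : R) : Prop :=
  p != 0 /\ ~ is_unit p /\
  forall x y : R, divides p (x * y) -> divides p x \/ divides p y.

Definition Ip (D : int) (p : qint D) (z : qint D) : Prop :=
  ~ is_unit z /\ ~ in_pideal p z /\
  exists m : qint D, ~ in_pideal p m /\ in_pideal p (z * m).

Definition Amat (D : int) (p : int) (z : qint D) : 'M[qint D]_2 :=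
  \matrix_(i < 2, j < 2)
    if (i == 0) && (j == 0) then p%:~R
    else if (i == 0) && (j == 1) then z
    else if (i == 1) && (j == 0) then qconj z
    else ((qnormZ z %/ p)%Z)%:~R.

Definition mx2 (R : nzRingType) (a b c d : R) : 'M[R]_2 :=
  \matrix_(i < 2, j < 2)
    if (i == 0) && (j == 0) then a
    else if (i == 0) && (j == 1) then b
    else if (i == 1) && (j == 0) then c
    else d.

Definition idempotent_mx (R : nzRingType) (M : 'M[R]_2) : Prop := M *m M = M.

(* Over any commutative ring, a 2x2 matrix of trace 1 is idempotent exactly
   when its determinant vanishes, so both sides of the equivalence are
   polynomial identities in the entries.  The five equations follow from
   B C = A(p,z) and det B = det C = 0 by ring arithmetic.  Conversely,
   multiplying by p, z or k and using p k = z conj z recovers the entries of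
   B C and the two determinant conditions; the cancellations are legitimate
   because O_D is an integral domain (sqrt D is irrational) and p, z, k are
   nonzero.  That p divides ||z||, so that k is an integer with p k = ||z||,
   comes from z being a zero divisor modulo p: were p coprime to ||z||, a
   Bezout relation u p + v z conj z = 1 would put every m with z m in <p>
   into <p>. *)

From HB Require Import structures.
From mathcomp Require Import all_boot all_order all_algebra.
From mathcomp Require Import ring zify.
Set Implicit Arguments.
Unset Strict Implicit.
Unset Printing Implicit Defensive.
Import Order.TTheory GRing.Theory Num.Theory.
Local Open Scope ring_scope.

Lemma mx2M (R : nzRingType) (a b c d a' b' c' d' : R) :
  mx2 a b c d *m mx2 a' b' c' d' =
  mx2 (a * a' + b * c') (a * b' + b * d') (c * a' + d * c') (c * b' + d * d').
Proof.
apply/matrixP => i j; rewrite !mxE !big_ord_recl big_ord0 !mxE addr0.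
by case: i j => [[|[|i]] ?] [[|[|j]] ?].
Qed.

Lemma mx2_inj (R : nzRingType) (a b c d a' b' c' d' : R) :
  mx2 a b c d = mx2 a' b' c' d' -> [/\ a = a', b = b', c = c' & d = d'].
Proof.
move=> eq_mx; have entry i j := congr1 (fun M : 'M_2 => M i j) eq_mx.
by move: (entry 0 0) (entry 0 1) (entry 1 0) (entry 1 1); rewrite !mxE.
Qed.

Lemma idempotent_mx2 (R : comNzRingType) (a b c : R) :
  idempotent_mx (mx2 a b c (1 - a)) <-> b * c = a * (1 - a).
Proof.
rewrite /idempotent_mx mx2M; split=> [/mx2_inj[aE _ _ _] | bc].
  by apply: (addrI (a * a)); rewrite aE; ring.
by rewrite (mulrC c b) bc; congr mx2; ring.
Qed.

Section IdempotentFactorization.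

Variables (R : comNzRingType) (p z w k : R).
Hypothesis pk : p * k = z * w.
Hypotheses (p_reg : GRing.lreg p) (z_reg : GRing.lreg z) (k_reg : GRing.lreg k).

Lemma idempotent_factorization_mx2 (a b c d e f : R) :
  (mx2 p z w k = mx2 a b c (1 - a) *m mx2 d e f (1 - d) /\
   idempotent_mx (mx2 a b c (1 - a)) /\ idempotent_mx (mx2 d e f (1 - d)))
  <->
  (p = a * d + b * f /\ z * (1 - a) = k * b /\ w * a = p * c /\
   z * d = p * e /\ w * (1 - d) = k * f).
Proof.
rewrite !idempotent_mx2 mx2M; split.
  by case=> /mx2_inj[-> -> -> ->] [bc ef]; do !split; ring: bc ef.
case=> pE [zb [wa [zd wd]]].
have zf : z * f = p * (1 - d).
  by apply: k_reg; rewrite mulrCA -wd [LHS]mulrA -pk; ring.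
have wb : w * b = p * (1 - a).
  by apply: k_reg; rewrite mulrCA -zb [LHS]mulrA (mulrC w) -pk; ring.
have zc : z * c = k * a.
  by apply: p_reg; rewrite mulrCA -wa [LHS]mulrA -pk; ring.
have zE : z = a * e + b * (1 - d).
  apply: p_reg; rewrite [in LHS]pE mulrDl -!mulrA (mulrC d) (mulrC f) zd zf.
  by ring.
have wE : w = c * d + (1 - a) * f.
  apply: p_reg; rewrite [LHS]mulrC [in LHS]pE [in LHS]mulrDr ![in LHS]mulrA.
  by rewrite wa wb; ring.
have kE : k = c * e + (1 - a) * (1 - d).
  apply: z_reg; rewrite [in LHS]zE [RHS]mulrDr ![in RHS]mulrA.
  by rewrite zc zb; ring.
have bc : b * c = a * (1 - a).
  by apply: z_reg; rewrite [LHS]mulrCA zc [RHS]mulrCA zb; ring.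
have ef : e * f = d * (1 - d).
  by apply: z_reg; rewrite [LHS]mulrCA zf [RHS]mulrA zd; ring.
by rewrite -pE -zE -wE -kE.
Qed.

End IdempotentFactorization.

Lemma dvdz_norm_of_zero_divisor (R : comNzRingType) (p : nat) (N : int)
    (z w m : R) :
  prime p -> z * w = N%:~R -> ~ in_pideal p%:R m -> in_pideal p%:R (z * m) ->
  (p %| N)%Z.
Proof.
move=> p_prime zwN m_notin [v zmE]; apply/negP => p_ndvd; apply: m_notin.
have /coprimezP[[s t] /= st1] : coprimez p N.
  by rewrite coprimezE /= prime_coprime //; apply/negP.
exists (s%:~R * m + t%:~R * w * v).
transitivity ((s * p + t * N)%:~R * m); first by rewrite st1 mul1r.
by rewrite intrD !intrM -zwN; ring: zmE.
Qed.

Lemma squarefree_sqrt_irrational (D X Y : int) :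
  squarefree D -> D != 1 -> X * X = D * (Y * Y) -> Y = 0.
Proof.
move=> [D_neq0 D_sqf] D_neq1 XYE; apply/eqP; apply: contraT => Y_neq0.
have D_gt0 : 0 < D.
  have : 0 < Y * Y by nia.
  have : 0 <= X * X by nia.
  rewrite XYE; nia.
have XYE_nat : (`|X| ^ 2 = `|D| * `|Y| ^ 2)%N.
  apply/eqP; rewrite -(eqr_nat int).
  by rewrite natrM !natrX !natz !abszE -!normrX -normrM !expr2 XYE.
have : (`|Y| ^ 2 %| `|X| ^ 2)%N by rewrite XYE_nat dvdn_mull.
rewrite dvdn_pexp2r // => /dvdnP [t Xt].
have absD : (t * t = `|D|)%N.
  move: XYE_nat; rewrite Xt expnMn => /eqP.
  rewrite eqn_pmul2r ?expn_gt0 ?absz_gt0 ?Y_neq0 // => /eqP <-.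
  by rewrite expnS expn1.
have t1 : t = 1%N by apply: D_sqf; rewrite absD dvdnn.
by move: absD D_neq1; rewrite t1; lia.
Qed.

Section Qint.
Variable D : int.
Implicit Types x y : qint D.

Lemma is1mod4_nD : is1mod4 D -> D = 4 * nD D + 1.
Proof.
rewrite /nD /is1mod4 => /eqP D_mod4; rewrite D_mod4.
have D_div := divz_eq D 4; rewrite D_mod4 in D_div.
have -> : D - 1 = (D %/ 4)%Z * 4 by rewrite {1}D_div addrK.
by rewrite mulzK // mulrC {1}D_div.
Qed.

Lemma qint_intrE (n : int) : (n%:~R : qint D) = QI D n 0.
Proof.
have natE (m : nat) : (m%:R : qint D) = QI D m 0.
  by elim: m => [|m IHm] //; rewrite mulrS IHm /GRing.add /=; congr QI; lia.
case: n => m; first exact: natE.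
by rewrite NegzE mulrNz -pmulrn natE /GRing.opp /=; congr QI; lia.
Qed.

Lemma qnormZE x :
  qnormZ x = re x * re x + tD D * re x * im x - nD D * im x * im x.
Proof. by case: x => a b; rewrite /qnormZ /=; ring. Qed.

Lemma qnormZM x y : qnormZ (x * y) = qnormZ x * qnormZ y.
Proof. by case: x => a b; case: y => c d; rewrite !qnormZE /=; ring. Qed.

Lemma mulr_qconj x : x * qconj x = (qnormZ x)%:~R.
Proof. by rewrite qint_intrE qnormZE; case: x => a b; congr QI => /=; ring. Qed.

Hypotheses (D_sqf : squarefree D) (D_neq1 : D != 1).

Lemma qnormZ_eq0 x : qnormZ x = 0 -> x = 0.
Proof.
case: x => a b; rewrite qnormZE /tD /= => N0.
have b0 : b = 0.
  case D_mod4: (is1mod4 D) in N0.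
    (* with D = 4 n + 1: (2 a + b)^2 - D b^2 = 4 (a^2 + a b - n b^2) *)
    apply: (squarefree_sqrt_irrational (X := 2 * a + b) D_sqf D_neq1).
    by rewrite [in RHS](is1mod4_nD D_mod4); nia.
  apply: (squarefree_sqrt_irrational (X := a) D_sqf D_neq1).
  by move: N0; rewrite /nD D_mod4; nia.
have a0 : a = 0 by move: N0; rewrite b0; nia.
by rewrite a0 b0.
Qed.

Lemma qint_lreg x : x != 0 -> GRing.lreg x.
Proof.
move=> x_neq0 y y' xyE; apply/eqP; rewrite -subr_eq0; apply/eqP/qnormZ_eq0.
have Nx_neq0 : qnormZ x != 0 by apply: contra_neq x_neq0; apply: qnormZ_eq0.
apply: (mulfI Nx_neq0); rewrite mulr0 -qnormZM mulrBr xyE subrr qnormZE /=.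
by ring.
Qed.

Lemma Amat_mx2 (p : nat) (z : qint D) :
  Amat p z = mx2 p%:R z (qconj z) ((qnormZ z %/ p)%Z)%:~R.
Proof. by rewrite /Amat /mx2 pmulrn. Qed.

End Qint.

Theorem lemma3p1 (D : int) (p : nat) (z : qint D) :
  squarefree D -> D != 1 ->
  prime p ->
  irreducible_elt (p%:R : qint D) -> ~ prime_elt (p%:R : qint D) ->
  Ip (p%:R : qint D) z ->
  let k : qint D := ((qnormZ z %/ p%:Z)%Z)%:~R in
  forall a b c d e f : qint D,
    (Amat p z = mx2 a b c (1 - a) *m mx2 d e f (1 - d) /\
     idempotent_mx (mx2 a b c (1 - a)) /\ idempotent_mx (mx2 d e f (1 - d)))
    <->
    (p%:R = a * d + b * f /\ z * (1 - a) = k * b /\ qconj z * a = p%:R * c /\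
     z * d = p%:R * e /\ qconj z * (1 - d) = k * f).
Proof.
(* Irreducibility of p is only used for p != 0, and "p not prime" not at all. *)
move=> D_sqf D_neq1 p_prime [p_neq0 _] _ [_ [z_notin [m [m_notin zm_in]]]] k.
have p_dvd : (p %| qnormZ z)%Z.
  exact: dvdz_norm_of_zero_divisor p_prime (mulr_qconj z) m_notin zm_in.
have pk : p%:R * k = z * qconj z.
  by rewrite mulr_qconj -(divzK p_dvd) intrM mulrC pmulrn.
have z_neq0 : z != 0.
  by apply: contra_notN z_notin => /eqP->; exists 0; rewrite mulr0.
have k_neq0 : k != 0.
  apply: contra_neq z_neq0 => k0; apply: (qnormZ_eq0 D_sqf D_neq1).
  by move: pk; rewrite k0 mulr0 mulr_qconj qint_intrE => -[].
have reg := qint_lreg D_sqf D_neq1.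
move=> a b c d e f; rewrite Amat_mx2.
exact: (idempotent_factorization_mx2 pk
          (reg _ p_neq0) (reg _ z_neq0) (reg _ k_neq0)).
Qed.
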